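(* In the two-bidder, two-configuration asymmetric setting below, assume $0<p<1$ and $r_1>r'_1>r'_2>r_2$ (uniform winner with incongruent loser). Write $p'=1-p$. Then there exist $q\in(0,p)$ and $q'\in(0,p')$ such that, with $$x=\frac{(p-q)r_2+q'r'_2}{p-q+q'},\quad y=\frac{qr_2+(p'-q')r'_2}{q+p'-q'},\quad z=\frac{qr_1+q'r'_1}{q+q'},$$ one has $x<y\le z$, and the information structure that sends, when the CTR vector is $(r_1,r_2)$, signal $(r_1,x)$ with probability $p-q$ and $(z,y)$ with probability $q$, and, when the CTR vector is $(r'_1,r'_2)$, signal $(z,x)$ with probability $q'$ and $(r'_1,y)$ with probability $p'-q'$, is calibrated, partially bundles both bidders (so is interior), and has revenue strictly larger than both full disclosure and no disclosure.
   Context: Setting. Two bidders with values $v_1=v_2=1$. The CTR vector equals $(r_1,r_2)$ with probability $p$ and $(r'_1,r'_2)$ with probability $1-p$, all entries in $[0,1]$, labeled so that $r_1\ge r'_1,r_2,r'_2$. An information structure is a finitely supported probability distribution on pairs $(r,s)\in[0,1]^2\times[0,1]^2$ whose $r$-marginal is this prior (the probabilities above are joint probabilities of (CTR vector, signal)). Given signals $s$, the winner $i^*$ maximizes $s_i$ (uniform tie-breaking), pays per click $s_j/s_{i^*}$ with $j\ne i^*$ (revenue $0$ if $s_{i^*}=0$), only upon a click, which occurs with probability $r_{i^*}$; revenue is $\mathbb{E}[r_{i^*}p_{i^*}]$. Calibrated: $\mathbb{E}[r_i\mid s_i=t]=t$ for every $i$ and every $t$ with $\Pr[s_i=t]>0$.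 Full disclosure: $s=r$ a.s.; no disclosure: $s_i=\mathbb{E}[r_i]$ a.s. Bidder $i$ is unbundled if $s_i=r_i$ a.s., fully bundled if $s_i=\mathbb{E}[r_i]$ a.s., and partially bundled otherwise; a structure is interior if both bidders are partially bundled. *)

From HB Require Import structures.
From mathcomp Require Import all_boot all_order all_algebra.
From mathcomp Require Import reals.
Set Implicit Arguments. Unset Strict Implicit. Unset Printing Implicit Defensive.
Import Order.TTheory GRing.Theory Num.Theory.
Local Open Scope ring_scope.

Section Auction.
Variable R : realType.

Definition vec := (R * R)%type.
(* Bidder index: true = bidder 1, false = bidder 2. *)
Definition coord (i : bool) (v : vec) : R := if i then v.1 else v.2.

(* An atom of a finitely supported distribution on (r, s): (probability, (r, s)). *)
Definition atom := (R * (vec * vec))%type.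
Definition weight (a : atom) : R := a.1.
Definition ctr (a : atom) : vec := a.2.1.
Definition sig (a : atom) : vec := a.2.2.

(* A prior: finitely supported distribution on CTR vectors. *)
Definition prior_t := seq (R * vec).

Definition prob (I : seq atom) (P : atom -> bool) : R :=
  \sum_(a <- I) (if P a then weight a else 0).
Definition expect (I : seq atom) (f : atom -> R) : R :=
  \sum_(a <- I) weight a * f a.

Definition in01 (x : R) := 0 <= x <= 1.

Definition is_info_structure (prior : prior_t) (I : seq atom) : Prop :=
  (forall a, a \in I ->
     [/\ 0 <= weight a, in01 (ctr a).1, in01 (ctr a).2, in01 (sig a).1
       & in01 (sig a).2]) /\
  (forall v : vec, prob I (fun a => ctr a == v) =
                   \sum_(b <- prior) (if b.2 == v then b.1 else 0)).

Definition calibrated (I : seq atom) : Prop :=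
  forall (i : bool) (t : R),
    0 < prob I (fun a => coord i (sig a) == t) ->
    (\sum_(a <- I) (if coord i (sig a) == t then weight a * coord i (ctr a) else 0))
      / prob I (fun a => coord i (sig a) == t) = t.

(* Expected payment (per realized CTR r) if bidder i wins with signals s:
   pays s_j / s_i per click, click w.p. r_i; 0 if s_i = 0. *)
Definition pay (i : bool) (r s : vec) : R :=
  if coord i s == 0 then 0 else coord i r * (coord (~~ i) s / coord i s).

Definition rev_atom (r s : vec) : R :=
  if s.2 < s.1 then pay true r s
  else if s.1 < s.2 then pay false r s
  else (pay true r s + pay false r s) / 2.

Definition revenue (I : seq atom) : R :=
  expect I (fun a => rev_atom (ctr a) (sig a)).

Definition unbundled (I : seq atom) (i : bool) : Prop :=
  forall a, a \in I -> 0 < weight a -> coord i (sig a) = coord i (ctr a).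
Definition fully_bundled (I : seq atom) (i : bool) : Prop :=
  forall a, a \in I -> 0 < weight a ->
    coord i (sig a) = expect I (fun b => coord i (ctr b)).
Definition partially_bundled (I : seq atom) (i : bool) : Prop :=
  ~ unbundled I i /\ ~ fully_bundled I i.
Definition interior (I : seq atom) : Prop :=
  partially_bundled I true /\ partially_bundled I false.

Definition full_disclosure (prior : prior_t) : seq atom :=
  [seq (b.1, (b.2, b.2)) | b <- prior].
Definition prior_mean (prior : prior_t) : vec :=
  (\sum_(b <- prior) b.1 * b.2.1, \sum_(b <- prior) b.1 * b.2.2).
Definition no_disclosure (prior : prior_t) : seq atom :=
  [seq (b.1, (b.2, prior_mean prior)) | b <- prior].

End Auction.

From Pilot Require Import Defs.
From HB Require Import structures.
From mathcomp Require Import all_boot all_order all_algebra.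
From mathcomp Require Import reals ring lra.
Set Implicit Arguments. Unset Strict Implicit. Unset Printing Implicit Defensive.
Import Order.TTheory GRing.Theory Num.Theory.
Local Open Scope ring_scope.
(* Restore Defs.coord, which all_algebra shadows by the vector-space coord. *)
Import Pilot.Defs.

(* Every pooled signal is a weighted average of the pooled CTRs,
   which gives calibration, and under q p' + q' p < p p' the weight of the
   high CTR r2' is smaller in x than in y, so x < y.

   Revenue: when bidder 1 always wins with signals (s1, s2), an atom pays
   r1 s2 / s1.  Both full and no disclosure therefore earn E[r2], and so
   does the pooled structure up to the correction q (r1 - z)(y - x) / z,
   which is positive because z < r1 and x < y. *)

Section WeightedAverage.
Variable R : realType.

Definition wavg (a b u v : R) : R := (a * u + b * v) / (a + b).

Lemma wavgK (a b u v : R) : a + b != 0 -> wavg a b u v * (a + b) = a * u + b * v.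
Proof. by move=> nz; rewrite /wavg divfK. Qed.

Lemma wavgC (a b u v : R) : wavg a b u v = wavg b a v u.
Proof. by rewrite /wavg addrC (addrC a). Qed.

Lemma wavg_between (a b u v : R) :
  0 < a -> 0 < b -> u < v -> u < wavg a b u v < v.
Proof.
move=> ha hb uv; have hab : 0 < a + b by rewrite addr_gt0.
have au : a * u < a * v by rewrite ltr_pM2l.
have bu : b * u < b * v by rewrite ltr_pM2l.
by rewrite /wavg ltr_pdivlMr // ltr_pdivrMr //; apply/andP; split; lra.
Qed.

(* Moving relative weight towards the larger point increases the average:
   b / (a + b) < d / (c + d) holds exactly when b c < a d. *)
Lemma wavg_lt_wavg (a b c d u v : R) :
  0 < a + b -> 0 < c + d -> u < v -> b * c < a * d ->
  wavg a b u v < wavg c d u v.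
Proof.
move=> hab hcd uv bc_ad; rewrite /wavg ltr_pdivrMr // mulrAC ltr_pdivlMr //.
rewrite -subr_gt0.
have -> : (c * u + d * v) * (a + b) - (a * u + b * v) * (c + d)
          = (a * d - b * c) * (v - u) by ring.
by rewrite mulr_gt0 // subr_gt0.
Qed.

End WeightedAverage.

Section Revenue.
Variable R : realType.

Lemma rev_atom_first (r s : vec R) :
  s.2 < s.1 -> s.1 != 0 -> rev_atom r s = r.1 * (s.2 / s.1).
Proof. by move=> lt21 nz1; rewrite /rev_atom lt21 /pay /= (negbTE nz1). Qed.

Lemma revenue_full_disclosure (prior : prior_t R) :
  (forall b, b \in prior -> 0 <= b.2.2 < b.2.1) ->
  revenue (full_disclosure prior) = \sum_(b <- prior) b.1 * b.2.2.
Proof.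
move=> hprior; rewrite /revenue /expect big_map.
apply: eq_big_seq => b /hprior /andP[b2_ge0 b21].
have b1_neq0 : b.2.1 != 0 by rewrite gt_eqF // (le_lt_trans b2_ge0 b21).
by rewrite /weight /ctr /sig /= rev_atom_first // [_.2.1 * _]mulrC divfK.
Qed.

(* If bidder 1 has the higher mean CTR, no disclosure earns the mean CTR of
   bidder 2: each configuration pays r1 m2 / m1, and E[r1] = m1. *)
Lemma revenue_no_disclosure (prior : prior_t R) :
  (prior_mean prior).2 < (prior_mean prior).1 -> (prior_mean prior).1 != 0 ->
  revenue (no_disclosure prior) = (prior_mean prior).2.
Proof.
move=> lt21 nz1; rewrite /revenue /expect big_map.
rewrite (eq_bigr (fun b => b.1 * b.2.1 * ((prior_mean prior).2 / (prior_mean prior).1)));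
  last by move=> b _; rewrite /weight /ctr /sig /= rev_atom_first // mulrA.
rewrite -big_distrl /=.
have -> : \sum_(b <- prior) b.1 * b.2.1 = (prior_mean prior).1 by [].
by rewrite mulrC divfK.
Qed.

End Revenue.

Section Bundling.
Variable R : realType.
Implicit Types (I : seq (atom R)) (i : bool) (a b : atom R).

(* Calibration only needs to be checked at signal values that occur: every
   t of positive mass is the signal of some atom.  The condition is stated
   in multiplied-out form, E[r_i ; s_i = t] = t Pr[s_i = t]. *)
Lemma calibrated_of_atoms I :
  (forall i a, a \in I ->
     let t := coord i (sig a) in
     \sum_(b <- I) (if coord i (sig b) == t then weight b * coord i (ctr b) else 0)
       = t * prob I (fun b => coord i (sig b) == t)) ->
  calibrated I.
Proof.
move=> hI i t pos.
have [a aI /eqP ta] : exists2 a, a \in I & coord i (sig a) == t.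
  apply/hasP; apply: contraTT pos => /hasPn none.
  by rewrite /prob big1_seq ?ltxx // => b /andP[_ /none /negbTE ->].
by move: pos; rewrite -ta => pos; rewrite hI // mulfK // gt_eqF.
Qed.

Lemma not_unbundled I i a :
  a \in I -> 0 < weight a -> coord i (sig a) != coord i (ctr a) -> ~ unbundled I i.
Proof. by move=> aI wa /eqP ne ub; apply/ne/ub. Qed.

Lemma not_fully_bundled I i a b :
  a \in I -> b \in I -> 0 < weight a -> 0 < weight b ->
  coord i (sig a) != coord i (sig b) -> ~ fully_bundled I i.
Proof. by move=> aI bI wa wb /eqP ne fb; apply: ne; rewrite (fb a) ?(fb b). Qed.

End Bundling.

Definition admissible_pooling (R : realType) (p p' q q' : R) : Prop :=
  [/\ 0 < q, q < p, 0 < q', q' < p' & q * p' + q' * p < p * p'].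

Definition uniform_winner (R : realType) (r1 r2 r1' r2' : R) : Prop :=
  [/\ 0 <= r2, r2 < r2', r2' < r1', r1' < r1 & r1 <= 1].

Section Pooling.
Variables (R : realType) (p p' q q' r1 r2 r1' r2' : R).
Hypothesis adm : admissible_pooling p p' q q'.
Hypothesis ord : uniform_winner r1 r2 r1' r2'.

Definition x_sig : R := wavg (p - q) q' r2 r2'.
Definition y_sig : R := (q * r2 + (p' - q') * r2') / (q + p' - q').
Definition z_sig : R := wavg q q' r1 r1'.

Definition two_point_prior : prior_t R := [:: (p, (r1, r2)); (p', (r1', r2'))].

Definition pooled_structure : seq (atom R) :=
  [:: (p - q, ((r1, r2), (r1, x_sig)));
      (q, ((r1, r2), (z_sig, y_sig)));
      (q', ((r1', r2'), (z_sig, x_sig)));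
      (p' - q', ((r1', r2'), (r1', y_sig)))].

(* y is the average with weights q and p' - q', as written in the theorem. *)
Lemma y_sigE : y_sig = wavg q (p' - q') r2 r2'.
Proof. by rewrite /y_sig /wavg addrA. Qed.

Lemma x_bounds : r2 < x_sig < r2'.
Proof.
have [q_gt0 q_lt_p q'_gt0 _ _] := adm; have [_ r22 _ _ _] := ord.
by apply: wavg_between; rewrite ?subr_gt0.
Qed.

Lemma y_bounds : r2 < y_sig < r2'.
Proof.
have [q_gt0 _ q'_gt0 q'_lt_p' _] := adm; have [_ r22 _ _ _] := ord.
by rewrite y_sigE; apply: wavg_between; rewrite ?subr_gt0.
Qed.

Lemma z_bounds : r1' < z_sig < r1.
Proof.
have [q_gt0 _ q'_gt0 _ _] := adm; have [_ _ _ r11 _] := ord.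
by rewrite /z_sig wavgC; apply: wavg_between.
Qed.

(* The splitting condition q p' + q' p < p p' is q' q < (p - q)(p' - q'):
   x puts less relative weight than y on the larger CTR r2'. *)
Lemma x_lt_y : x_sig < y_sig.
Proof.
have [q_gt0 q_lt_p q'_gt0 q'_lt_p' split_pq] := adm; have [_ r22 _ _ _] := ord.
by rewrite y_sigE; apply: wavg_lt_wavg => //; lra.
Qed.

(* z exceeds y since y < r2' < r1' < z. *)
Lemma y_lt_z : y_sig < z_sig.
Proof.
have [_ _ r21 _ _] := ord; have [_ y1] := andP y_bounds; have [z0 _] := andP z_bounds.
lra.
Qed.

Lemma pooled_info : is_info_structure two_point_prior pooled_structure.
Proof.
have [q_gt0 q_lt_p q'_gt0 q'_lt_p' _] := adm; have [r2_ge0 _ r21 _ r1_le1] := ord.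
have [x0 x1] := andP x_bounds; have [y0 y1] := andP y_bounds.
have [z0 z1] := andP z_bounds.
split.
  move=> a; rewrite !inE => /or4P[]/eqP-> ;
  by rewrite /weight /ctr /sig /in01 /=; split; lra.
move=> v; rewrite /prob !big_cons !big_nil /weight /ctr /=.
by case: ((r1, r2) == v); case: ((r1', r2') == v); ring.
Qed.

Lemma pooled_calibrated : calibrated pooled_structure.
Proof.
have [q_gt0 q_lt_p q'_gt0 q'_lt_p' _] := adm; have [_ _ _ r11 _] := ord.
have [z0 z1] := andP z_bounds.
have Dx : x_sig * (p - q + q') = (p - q) * r2 + q' * r2'.
  by rewrite wavgK // gt_eqF //; lra.
have Dy : y_sig * (q + (p' - q')) = q * r2 + (p' - q') * r2'.
  by rewrite y_sigE wavgK // gt_eqF //; lra.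
have Dz : z_sig * (q + q') = q * r1 + q' * r1' by rewrite wavgK // gt_eqF //; lra.
have distinct := (lt_eqF z1, gt_eqF z1, lt_eqF z0, gt_eqF z0,
  lt_eqF r11, gt_eqF r11, lt_eqF x_lt_y, gt_eqF x_lt_y).
apply: calibrated_of_atoms => i a; rewrite !inE => /or4P[]/eqP-> ;
by case: i; rewrite /prob !big_cons !big_nil /weight /ctr /sig /= ?eqxx ?distinct /=; lra.
Qed.

(* Bidder 1 sees z instead of r1 on the second atom and distinguishes r1
   from z; bidder 2 sees x instead of r2 and distinguishes x from y. *)
Lemma pooled_interior : interior pooled_structure.
Proof.
have [q_gt0 q_lt_p _ _ _] := adm.
have [x0 _] := andP x_bounds; have [_ z1] := andP z_bounds.
have in1 : (p - q, ((r1, r2), (r1, x_sig))) \in pooled_structure by rewrite inE eqxx.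
have in2 : (q, ((r1, r2), (z_sig, y_sig))) \in pooled_structure by rewrite !inE eqxx orbT.
have w1 : 0 < p - q by rewrite subr_gt0.
split; split.
- by apply: (not_unbundled in2) => //=; rewrite lt_eqF.
- by apply: (not_fully_bundled in1 in2) => //=; rewrite gt_eqF.
- by apply: (not_unbundled in1) => //=; rewrite gt_eqF.
- by apply: (not_fully_bundled in1 in2) => //=; rewrite lt_eqF // x_lt_y.
Qed.

(* Bidder 1 always wins, so both disclosure policies earn E[r2]. *)
Lemma disclosure_revenues :
  revenue (full_disclosure two_point_prior) = p * r2 + p' * r2' /\
  revenue (no_disclosure two_point_prior) = p * r2 + p' * r2'.
Proof.
have [q_gt0 q_lt_p q'_gt0 q'_lt_p' _] := adm; have [r2_ge0 r22 r21 r11 _] := ord.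
have p_gt0 : 0 < p by lra.
have p'_gt0 : 0 < p' by lra.
have m2_lt_m1 : p * r2 + p' * r2' < p * r1 + p' * r1'.
  by apply: ltrD; rewrite ltr_pM2l //; lra.
have m1_gt0 : 0 < p * r1 + p' * r1' by apply: addr_gt0; apply: mulr_gt0 => //; lra.
split.
  rewrite revenue_full_disclosure ?big_cons ?big_nil ?addr0 //.
  by move=> b; rewrite !inE => /orP[]/eqP-> /=; lra.
rewrite revenue_no_disclosure /= ?big_cons ?big_nil /= ?addr0 //.
by rewrite gt_eqF.
Qed.

Lemma pooled_revenue :
  revenue pooled_structure
  = p * r2 + p' * r2' + q * (r1 - z_sig) * (y_sig - x_sig) / z_sig.
Proof.
have [q_gt0 q_lt_p q'_gt0 q'_lt_p' _] := adm; have [r2_ge0 r22 r21 r11 _] := ord.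
have [_ x1] := andP x_bounds; have [_ y1] := andP y_bounds.
have [z0 z1] := andP z_bounds.
have r1'_gt0 : 0 < r1' by lra.
have z_num_gt0 : 0 < q * r1 + q' * r1' by rewrite addr_gt0 // mulr_gt0 //; lra.
rewrite /revenue /expect !big_cons big_nil /weight /ctr /sig /=.
rewrite !rev_atom_first /= ?gt_eqF //; try lra.
rewrite y_sigE /x_sig /z_sig /wavg; field.
by rewrite !gt_eqF //; lra.
Qed.

Lemma pooled_beats_disclosure :
  revenue (full_disclosure two_point_prior) < revenue pooled_structure /\
  revenue (no_disclosure two_point_prior) < revenue pooled_structure.
Proof.
have [q_gt0 _ _ _ _] := adm; have [z0 z1] := andP z_bounds.
have [r2_ge0 r22 r21 _ _] := ord.
have z_gt0 : 0 < z_sig by lra.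
have gain_gt0 : 0 < q * (r1 - z_sig) * (y_sig - x_sig) / z_sig.
  by rewrite divr_gt0 // mulr_gt0 ?subr_gt0 ?x_lt_y // mulr_gt0 ?subr_gt0.
have [-> ->] := disclosure_revenues.
by rewrite pooled_revenue ltrDl; split.
Qed.

End Pooling.

Theorem mainTheorem10 (R : realType) (p r1 r2 r1' r2' : R) :
  0 < p -> p < 1 ->
  0 <= r2 -> r1 <= 1 ->
  r1' < r1 -> r2' < r1' -> r2 < r2' ->
  let p' := 1 - p in
  let prior : prior_t R := [:: (p, (r1, r2)); (p', (r1', r2'))] in
  exists q q' : R,
    [/\ 0 < q, q < p, 0 < q' & q' < p'] /\
    let x := ((p - q) * r2 + q' * r2') / (p - q + q') in
    let y := (q * r2 + (p' - q') * r2') / (q + p' - q') in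
    let z := (q * r1 + q' * r1') / (q + q') in
    let I : seq (atom R) :=
      [:: (p - q, ((r1, r2), (r1, x)));
          (q, ((r1, r2), (z, y)));
          (q', ((r1', r2'), (z, x)));
          (p' - q', ((r1', r2'), (r1', y)))] in
    [/\ x < y, y <= z,
        is_info_structure prior I,
        calibrated I
      & interior I] /\
    revenue (full_disclosure prior) < revenue I /\
    revenue (no_disclosure prior) < revenue I.
Proof.
move=> p_gt0 p_lt1 r2_ge0 r1_le1 r11 r21 r22 p' prior.
have p'_gt0 : 0 < p' by rewrite subr_gt0.
(* Pool half of the first configuration and a quarter of the second:
   q p' + q' p = 3/4 p p' < p p'. *)
have adm : admissible_pooling p p' (p / 2) (p' / 4).
  have pp'_gt0 : 0 < p * p' by rewrite mulr_gt0.
  by split; lra.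
have ord : uniform_winner r1 r2 r1' r2' by split.
exists (p / 2), (p' / 4); split; first by case: adm.
split; first split.
- exact: x_lt_y adm ord.
- exact: ltW (y_lt_z adm ord).
- exact: pooled_info adm ord.
- exact: pooled_calibrated adm ord.
- exact: pooled_interior adm ord.
exact: pooled_beats_disclosure adm ord.
Qed.
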